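(* Let $R$ be a commutative Noetherian ring with $\dim R=2$ having only finitely many prime ideals of height two. Then $\operatorname{Spec} R$, ordered by inclusion, is a $K$-poset.
   Context: For a poset $U$: $\dim U$ is the supremum of lengths of chains; $L(u)=\{v\le u\}$, $G(u)=\{v\ge u\}$, $L(u)^*=L(u)\setminus\{u\}$, $G(u)^*=G(u)\setminus\{u\}$; height of $u$ is $\dim L(u)$; $H_i$ is the set of nodes of height $i$. For nonempty $A\subseteq U$, $\operatorname{mub}A$ is the set of minimal elements among the common upper bounds of $A$. $[b/c]$ denotes the set of $u$ with $G(u)^*=\{b\}$ and $L(u)^*=\{c\}$. A poset $U$ with $\dim U\le 2$ is a $K$-poset if: (1) $\min U$ and $H_2$ are finite; (2) for distinct $u,v\in\min U$, $\operatorname{mub}\{u,v\}$ is finite; (3) whenever $u>v>w$ for some $v$, $[u/w]$ is infinite. *)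

From mathcomp Require Import all_boot all_algebra.
From Stdlib Require Import List.
Set Implicit Arguments. Unset Strict Implicit. Unset Printing Implicit Defensive.
Import GRing.Theory.
Local Open Scope ring_scope.

Section RingDefs.
Variable R : comNzRingType.

Definition is_ideal (I : R -> Prop) : Prop :=
  [/\ I 0, (forall x y, I x -> I y -> I (x + y)) & (forall r x, I x -> I (r * x))].

Definition is_prime_ideal (P : R -> Prop) : Prop :=
  [/\ is_ideal P, ~ P 1 & (forall a b, P (a * b) -> P a \/ P b)].

Definition noetherian : Prop :=
  forall f : nat -> R -> Prop,
    (forall n, is_ideal (f n)) ->
    (forall n x, f n x -> f n.+1 x) ->
    exists N, forall n, (N <= n)%N -> forall x, f n x -> f N x.

Definition Spec : Type := {P : R -> Prop | is_prime_ideal P}.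
Definition spec_le (P Q : Spec) : Prop := forall x, proj1_sig P x -> proj1_sig Q x.
End RingDefs.

Section PosetDefs.
Variables (T : Type) (le : T -> T -> Prop).

Definition lt (x y : T) : Prop := le x y /\ x <> y.

Definition finite_sub (A : T -> Prop) : Prop :=
  exists s : list T, forall x, A x -> In x s.

Definition has_chain (A : T -> Prop) (n : nat) : Prop :=
  exists f : nat -> T,
    (forall i, (i <= n)%N -> A (f i)) /\ (forall i, (i < n)%N -> lt (f i) (f i.+1)).

Definition dim_le (A : T -> Prop) (n : nat) : Prop := ~ has_chain A n.+1.
Definition dim_eq (A : T -> Prop) (n : nat) : Prop := has_chain A n /\ dim_le A n.

Definition Lset (u : T) : T -> Prop := fun v => le v u.
Definition Gset (u : T) : T -> Prop := fun v => le u v.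

Definition Hset (i : nat) : T -> Prop := fun u => dim_eq (Lset u) i.

Definition minimal (u : T) : Prop := forall v, le v u -> v = u.

Definition ub (A : T -> Prop) (u : T) : Prop := forall a, A a -> le a u.
Definition mub (A : T -> Prop) : T -> Prop :=
  fun u => ub A u /\ (forall v, ub A v -> le v u -> v = u).

(* [b/c] : u with G(u)^* = {b} and L(u)^* = {c} *)
Definition bc_set (b c : T) : T -> Prop :=
  fun u => (forall w, (le u w /\ w <> u) <-> w = b) /\
           (forall w, (le w u /\ w <> u) <-> w = c).

Definition K_poset : Prop :=
  [/\ dim_le (fun _ => True) 2,
      finite_sub minimal,
      finite_sub (Hset 2),
      (forall u v, minimal u -> minimal v -> u <> v ->
          finite_sub (mub (fun x => x = u \/ x = v)))
    & (forall u v w, lt v u -> lt w v -> ~ finite_sub (bc_set u w))].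
End PosetDefs.

(* The finiteness conditions hold because in a Noetherian ring every ideal has finitely many
   minimal primes: over 0 these are the minimal primes, over P + Q the minimal common upper
   bounds of P and Q.
   For primes w < v < u and a finite set S of primes, prime avoidance gives x in u outside v and
   outside each member of S not containing u. Since v lies strictly between w and u, Krull's
   principal ideal theorem in R/w shows that u is not minimal over w + xR, so some prime q with
   w + xR <= q < u exists. As dim R = 2, the primes strictly above q are u and primes of height
   two, and those strictly below q are minimal primes z, q being a minimal upper bound of w and
   z when z <> w. Putting the height-two primes and these finitely many upper bounds into S
   forces q into [u/w] while q is not in S, so [u/w] is infinite.
   Krull's theorem is the classical argument: R_u/(w + xR)_u is Artinian, so for a in v \ w the
   chain (w + a^n R)R_v stabilises modulo x, and Nakayama then puts a^n into (w + a^(n+1)R)R_v,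
   which is impossible as w is prime. *)

From mathcomp Require Import all_boot all_algebra ring.
From Stdlib Require Import List Classical ClassicalEpsilon FunctionalExtensionality
  PropExtensionality ProofIrrelevance.

Set Implicit Arguments.
Unset Strict Implicit.
Unset Printing Implicit Defensive.

Import GRing.Theory.
Local Open Scope ring_scope.

Section Ideals.
Variable R : comNzRingType.
Implicit Types (I J K P : R -> Prop) (B : nat -> R -> Prop) (a c x y : R).

Definition sub I J := forall y, I y -> J y.
Definition strict_sub I J := sub I J /\ exists y, J y /\ ~ I y.

Lemma not_subP I J : ~ sub I J -> exists2 y, I y & ~ J y.
Proof.
move=> nIJ; apply: NNPP => noy; apply: nIJ => y Iy.
by apply: NNPP => nJy; apply: noy; exists y.
Qed.

Lemma ideal0 I : is_ideal I -> I 0. Proof. by case. Qed.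

Lemma idealD I x y : is_ideal I -> I x -> I y -> I (x + y).
Proof. by case=> _ + _; apply. Qed.

Lemma idealMl I c x : is_ideal I -> I x -> I (c * x).
Proof. by case=> _ _; apply. Qed.

Lemma idealMr I c x : is_ideal I -> I x -> I (x * c).
Proof. by rewrite mulrC; apply: idealMl. Qed.

Lemma idealB I x y : is_ideal I -> I x -> I y -> I (x - y).
Proof. by move=> HI Ix Iy; rewrite -mulN1r; apply: idealD; last apply: idealMl. Qed.

Lemma ideal_zero : is_ideal (fun y : R => y = 0).
Proof. by split=> [|x y -> ->|c x ->]; rewrite ?addr0 ?mulr0. Qed.

Lemma prime_idealP P : is_prime_ideal P -> is_ideal P. Proof. by case. Qed.

Lemma prime_notinM P x y : is_prime_ideal P -> ~ P x -> ~ P y -> ~ P (x * y).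
Proof. by case=> _ _ HP nPx nPy /HP []. Qed.

Lemma prime_notinX P x n : is_prime_ideal P -> ~ P x -> ~ P (x ^+ n).
Proof.
move=> HP nPx; elim: n => [|n IHn]; first by rewrite expr0; case: HP.
by rewrite exprS; apply: prime_notinM.
Qed.

Definition adjoin I a : R -> Prop := fun y => exists i c, I i /\ y = i + c * a.

Lemma adjoin_ideal I a : is_ideal I -> is_ideal (adjoin I a).
Proof.
move=> HI; split.
- by exists 0, 0; split; [apply: ideal0 | ring].
- move=> _ _ [i [c [Ii ->]]] [j [d [Ij ->]]].
  by exists (i + j), (c + d); split; [apply: idealD | ring].
- move=> r _ [i [c [Ii ->]]].
  by exists (r * i), (r * c); split; [apply: idealMl | ring].
Qed.

Lemma sub_adjoin I a : sub I (adjoin I a).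
Proof. by move=> y Iy; exists y, 0; split=> //; ring. Qed.

Lemma adjoin_mem I a : is_ideal I -> adjoin I a a.
Proof. by move=> HI; exists 0, 1; split; [apply: ideal0 | ring]. Qed.

Lemma adjoinS I J a : sub I J -> sub (adjoin I a) (adjoin J a).
Proof.
move=> sIJ _ [i [c [Ii ->]]]; exists i, c; split=> //; exact: sIJ.
Qed.

Lemma adjoin_min I J a : is_ideal J -> sub I J -> J a -> sub (adjoin I a) J.
Proof. by move=> HJ sIJ Ja _ [i [c [Ii ->]]]; apply: idealD (sIJ _ Ii) (idealMl _ HJ Ja). Qed.

Definition ideal_add I J : R -> Prop := fun y => exists i j, I i /\ J j /\ y = i + j.

Lemma ideal_add_ideal I J : is_ideal I -> is_ideal J -> is_ideal (ideal_add I J).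
Proof.
move=> HI HJ; split.
- by exists 0, 0; rewrite addr0; split; [apply: ideal0 | split=> //; apply: ideal0].
- move=> _ _ [i [j [Ii [Jj ->]]]] [i' [j' [Ii' [Jj' ->]]]].
  by exists (i + i'), (j + j'); split; [apply: idealD | split; [apply: idealD | ring]].
- move=> r _ [i [j [Ii [Jj ->]]]].
  by exists (r * i), (r * j); split; [apply: idealMl | split; [apply: idealMl | ring]].
Qed.

Lemma sub_addl I J : is_ideal J -> sub I (ideal_add I J).
Proof. by move=> HJ y Iy; exists y, 0; rewrite addr0; split=> //; split=> //; apply: ideal0. Qed.

Lemma sub_addr I J : is_ideal I -> sub J (ideal_add I J).
Proof. by move=> HI y Jy; exists 0, y; rewrite add0r; split=> //; apply: ideal0. Qed.

Lemma ideal_add_min I J K : is_ideal K -> sub I K -> sub J K -> sub (ideal_add I J) K.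
Proof. by move=> HK sIK sJK _ [i [j [Ii [Jj ->]]]]; apply: idealD (sIK _ Ii) (sJK _ Jj). Qed.

Fixpoint ideal_span (gs : list R) : R -> Prop :=
  if gs is g :: gs' then adjoin (ideal_span gs') g else fun y => y = 0.

Lemma ideal_span_ideal gs : is_ideal (ideal_span gs).
Proof. by elim: gs => [|g gs IH] /=; [apply: ideal_zero | apply: adjoin_ideal]. Qed.

Lemma ideal_span_min I gs : is_ideal I -> (forall g, In g gs -> I g) -> sub (ideal_span gs) I.
Proof.
move=> HI; elim: gs => [|g gs IH] gsI /=; first by move=> _ ->; apply: ideal0.
by apply: adjoin_min => //; [apply: IH => h gs_h; apply: gsI; right | apply: gsI; left].
Qed.

Definition descending B := forall n, sub (B n.+1) (B n).
Definition stationary B := exists N, forall n, (N <= n)%N -> sub (B N) (B n).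

Lemma descending_sub B m n : descending B -> (m <= n)%N -> sub (B n) (B m).
Proof.
move=> decB /subnK <-; elim: (n - m)%N => [|k IHk] y //.
by rewrite addSn => /decB /IHk.
Qed.

End Ideals.

Section Noetherian.
Variable R : comNzRingType.
Hypothesis HN : noetherian R.
Implicit Types I J : R -> Prop.

Lemma noetherian_ind (Q : (R -> Prop) -> Prop) :
  (forall I, is_ideal I -> (forall J, is_ideal J -> strict_sub I J -> Q J) -> Q I) ->
  forall I, is_ideal I -> Q I.
Proof.
move=> step I0 HI0; apply: NNPP => nQI0.
pose bad := {I | is_ideal I /\ ~ Q I}.
have next (B : bad) : {B' : bad | strict_sub (sval B) (sval B')}.
  apply: constructive_indefinite_description; apply: NNPP => noB'.
  case: (svalP B) => HB; apply; apply: step => // J HJ BJ; apply: NNPP => nQJ.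
  by apply: noB'; exists (exist _ J (conj HJ nQJ)).
pose fix chain n : bad :=
  if n is n'.+1 then sval (next (chain n')) else exist _ I0 (conj HI0 nQI0).
have [||N stab] := @HN (fun n => sval (chain n)).
- by move=> n; case: (svalP (chain n)).
- by move=> n; case: (svalP (next (chain n))) => + _; apply.
have [_ [y [yN1 nyN]]] := svalP (next (chain N)).
exact/nyN/(stab N.+1 (leqnSn N)).
Qed.

Lemma noetherian_maximal (F : (R -> Prop) -> Prop) :
  (forall I, F I -> is_ideal I) -> (exists I, F I) ->
  exists M, F M /\ forall J, F J -> sub M J -> sub J M.
Proof.
move=> FI [I0 FI0]; have HI0 := FI _ FI0; move: I0 HI0 FI0.
apply: noetherian_ind => I HI IH FI0.
case: (classic (exists J, F J /\ strict_sub I J)) => [[J [FJ sIJ]]|noJ].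
  exact: IH (FI _ FJ) sIJ FJ.
exists I; split=> // J FJ sIJ y Jy; apply: NNPP => nIy.
by apply: noJ; exists J; split=> //; split=> //; exists y.
Qed.

Lemma noetherian_finitely_generated I : is_ideal I ->
  exists gs, (forall g, In g gs -> I g) /\ sub I (ideal_span gs).
Proof.
move=> HI.
pose F J := exists gs, (forall g, In g gs -> I g) /\ J = ideal_span gs.
have [||_ [[gs [gsI ->]] gs_max]] := @noetherian_maximal F.
- by move=> _ [gs [_ ->]]; apply: ideal_span_ideal.
- by exists (ideal_span nil), nil.
exists gs; split=> // y Iy; apply: (gs_max (ideal_span (y :: gs))).
- by exists (y :: gs); split=> // g [<-|/gsI].
- exact: sub_adjoin.
- exact/adjoin_mem/ideal_span_ideal.
Qed.

Lemma primes_over_cover (I : R -> Prop) : is_ideal I ->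
  exists l : list (Spec R), (forall Q, In Q l -> sub I (sval Q)) /\
    forall P : Spec R, sub I (sval P) -> exists2 Q, In Q l & spec_le Q P.
Proof.
move: I; apply: noetherian_ind => I HI IH.
case: (classic (is_prime_ideal I)) => [PI|nPI].
  by exists [:: exist _ I PI]; split=> [Q [<-|[]] //|P IP]; exists (exist _ I PI) => //; left.
case: (classic (I 1)) => [I1|nI1].
  by exists nil; split=> // P /(_ 1 I1); case: (svalP P).
have [a [b [Iab [nIa nIb]]]] : exists a b, I (a * b) /\ ~ I a /\ ~ I b.
  apply: NNPP => noab; apply: nPI; split=> // a b Iab.
  apply: NNPP => /not_or_and [nIa nIb]; apply: noab; by exists a, b.
have cover_adjoin c : ~ I c -> exists l : list (Spec R),
    (forall Q, In Q l -> sub I (sval Q)) /\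
    forall P : Spec R, sub I (sval P) -> sval P c -> exists2 Q, In Q l & spec_le Q P.
  move=> nIc; have [|l [lI lP]] := IH (adjoin I c) (adjoin_ideal c HI).
    by split; [apply: sub_adjoin | exists c; split=> //; apply: adjoin_mem].
  exists l; split=> [Q /lI IQ y Iy|P IP Pc]; first exact/IQ/sub_adjoin.
  by apply: lP; apply: adjoin_min => //; case: (svalP P).
have [la [laI laP]] := cover_adjoin a nIa; have [lb [lbI lbP]] := cover_adjoin b nIb.
exists (la ++ lb); split=> [Q /in_app_iff [/laI|/lbI] //|P IP].
have [_ _ /(_ a b (IP _ Iab)) [Pa|Pb]] := svalP P.
- by have [Q ? ?] := laP P IP Pa; exists Q => //; apply/in_app_iff; left.
- by have [Q ? ?] := lbP P IP Pb; exists Q => //; apply/in_app_iff; right.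
Qed.

End Noetherian.

Section Saturation.
Variables (R : comNzRingType) (p : R -> Prop).
Hypothesis Pp : is_prime_ideal p.
Implicit Types (I J : R -> Prop) (B : nat -> R -> Prop) (g y : R).

(* [sat p J] is the contraction of the localization [J R_p]. *)
Definition sat J : R -> Prop := fun y => exists2 s, ~ p s & J (s * y).
Definition saturated J := sub (sat J) J.

Lemma sat_ideal J : is_ideal J -> is_ideal (sat J).
Proof.
have [_ np1 _] := Pp; move=> HJ; split.
- by exists 1; rewrite ?mulr0 //; apply: ideal0.
- move=> y z [s ns Jsy] [t nt Jtz]; exists (s * t); first exact: prime_notinM.
  have -> : s * t * (y + z) = t * (s * y) + s * (t * z) by ring.
  by apply: idealD (idealMl _ HJ Jsy) (idealMl _ HJ Jtz).
- move=> c y [s ns Jsy]; exists s => //.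
  by rewrite mulrCA; apply: idealMl.
Qed.

Lemma sub_sat J : sub J (sat J).
Proof. by have [_ np1 _] := Pp; move=> y Jy; exists 1; rewrite ?mul1r. Qed.

Lemma sat_saturated J : saturated (sat J).
Proof.
move=> y [s ns [t nt Jtsy]]; exists (t * s); first exact: prime_notinM.
by rewrite -mulrA.
Qed.

Lemma satS I J : sub I J -> sub (sat I) (sat J).
Proof. by move=> sIJ y [s ns Isy]; exists s => //; apply: sIJ. Qed.

Lemma sat_min I J : saturated J -> sub I J -> sub (sat I) J.
Proof. by move=> satJ sIJ y /(satS sIJ) /satJ. Qed.

Lemma saturatedMl J s y : saturated J -> ~ p s -> J (s * y) -> J y.
Proof. by move=> satJ ns Jsy; apply: satJ; exists s. Qed.

(* The quotient [sat (adjoin I g) / I] is a one-dimensional [R_p/pR_p]-space, so it meets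
   every saturated ideal above [I] either trivially or fully. *)
Lemma saturated_dichotomy I J g : is_ideal I -> saturated I ->
    (forall c, p c -> I (c * g)) -> is_ideal J -> saturated J -> sub I J ->
  sub (sat (adjoin I g)) J \/ forall y, J y -> sat (adjoin I g) y -> I y.
Proof.
move=> HI satI pgI HJ satJ sIJ.
case: (classic (exists y, [/\ J y, sat (adjoin I g) y & ~ I y])); last first.
  by move=> noy; right=> y Jy I'y; apply: NNPP => nIy; apply: noy; exists y.
move=> [y [Jy [s ns [i [c [Ii Esy]]]] nIy]]; left; apply: sat_min => //; apply: adjoin_min => //.
have nc : ~ p c.
  move=> pc; apply/nIy/(saturatedMl satI ns); rewrite Esy.
  by apply: idealD => //; apply: pgI.
apply: (saturatedMl satJ nc).
have -> : c * g = s * y - i by rewrite Esy; ring.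
by apply: idealB => //; [apply: idealMl | apply: sIJ].
Qed.

Lemma stationary_of_adjoin B g NA N : (forall n, is_ideal (B n)) -> descending B ->
    (forall n, saturated (B n)) ->
    (forall n, (NA <= n)%N -> sub (sat (adjoin (B NA) g)) (sat (adjoin (B n) g))) ->
    (NA <= N)%N -> (forall n c, (N <= n)%N -> B N (c * g) -> B n (c * g)) ->
  forall n, (N <= n)%N -> sub (B N) (B n).
Proof.
move=> HB decB satB stA NAN cgB n Nn y BNy.
have : sat (adjoin (B NA) g) y.
  by apply/sub_sat/sub_adjoin; apply: descending_sub BNy.
case/(stA n (leq_trans NAN Nn)) => s ns [b [c [Bnb Esy]]].
have BNb : B N b by apply: descending_sub Bnb.
have BNcg : B N (c * g).
  have -> : c * g = s * y - b by rewrite Esy; ring.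
  by apply: idealB => //; apply: idealMl.
apply: (saturatedMl (satB n) ns); rewrite Esy.
by apply: idealD => //; apply: cgB.
Qed.

(* Nakayama in [R_p]: a finitely generated [M] with [M <= K + xM], [x] in [pR_p], lies in [K]. *)
Lemma nakayama_sat K x gs : is_ideal K -> p x ->
    (forall g, In g gs -> exists s k r, [/\ ~ p s, K k, ideal_span gs r & s * g = k + x * r]) ->
  forall g, In g gs -> sat K g.
Proof.
have [Pi _ _] := Pp; move=> HK px.
elim: gs => [|g gs IH] // gen; have span_ideal := ideal_span_ideal gs.
have [s [k [_ [ns Kk [r' [c [gs_r' ->]]] Esg]]]] := gen g (or_introl erefl).
pose sg := s - x * c.
have nsg : ~ p sg.
  move=> psg; apply: ns; have -> : s = sg + x * c by rewrite /sg; ring.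
  by apply: idealD => //; apply: idealMr.
have Esgg : sg * g = k + x * r' by rewrite /sg mulrBl Esg; ring.
have gs_sat : forall h, In h gs -> sat K h.
  apply: IH => h gs_h.
  have [s' [k' [_ [ns' Kk' [r'' [c' [gs_r'' ->]]] Esh]]]] := gen h (or_intror gs_h).
  exists (sg * s'), (sg * k' + x * c' * k), (sg * r'' + x * c' * r'); split.
  - exact: prime_notinM.
  - by apply: idealD => //; apply: idealMl.
  - by apply: idealD => //; apply: idealMl.
  - have Ek : k = sg * g - x * r' by rewrite Esgg; ring.
    by rewrite -mulrA Esh Ek; ring.
have [t nt Ktr'] := ideal_span_min (sat_ideal HK) gs_sat gs_r'.
move=> h [<-|/gs_sat //]; exists (t * sg); first exact: prime_notinM.
have -> : t * sg * g = t * k + x * (t * r') by rewrite -mulrA Esgg; ring.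
by apply: idealD => //; apply: idealMl.
Qed.

End Saturation.

Section ArtinianLocalization.
Variables (R : comNzRingType) (u I0 : R -> Prop).
Hypotheses (HN : noetherian R) (Pu : is_prime_ideal u) (HI0 : is_ideal I0).
Hypothesis u_minimal : forall Q, is_prime_ideal Q -> sub I0 Q -> sub Q u -> sub u Q.
Implicit Types (I J : R -> Prop) (B : nat -> R -> Prop) (g : R).

Definition colon I g : R -> Prop := fun c => I (c * g).

Lemma colon_ideal I g : is_ideal I -> is_ideal (colon I g).
Proof.
move=> HI; split; rewrite /colon.
- by rewrite mul0r; apply: ideal0.
- by move=> c d Icg Idg; rewrite mulrDl; apply: idealD.
- by move=> r c Icg; rewrite -mulrA; apply: idealMl.
Qed.

(* A maximal annihilator [I : g] is a prime between [I0] and [u], hence equal to [u]. *)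
Lemma exists_u_annihilated I : is_ideal I -> saturated u I -> sub I0 I -> ~ I 1 ->
  exists2 g, ~ I g & sub u (colon I g).
Proof.
move=> HI satI I0I nI1.
pose F J := exists2 g, ~ I g & J = colon I g.
have [||_ [[g nIg ->]] g_max] := @noetherian_maximal R HN F.
- by move=> _ [g _ ->]; apply: colon_ideal.
- by exists (colon I 1), 1.
exists g => //; apply: u_minimal.
- split; [exact: colon_ideal | by rewrite /colon mul1r |].
  move=> b c Ibcg; case: (classic (I (b * g))) => [Ibg|nIbg]; [by left | right].
  apply: (g_max (colon I (b * g))); first by exists (b * g).
    by move=> d Idg; rewrite /colon mulrCA; apply: idealMl.
  by rewrite /colon mulrCA mulrA.
- by move=> c /I0I Ic; rewrite /colon; apply: idealMr.
- by move=> c Icg; apply: NNPP => nuc; apply/nIg/(saturatedMl satI nuc).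
Qed.

Lemma saturated_chain_stationary_above I :
    is_ideal I -> saturated u I -> sub I0 I ->
  forall B, (forall n, is_ideal (B n)) -> (forall n, saturated u (B n)) -> descending B ->
    (forall n, sub I (B n)) -> stationary B.
Proof.
move: I; apply: (noetherian_ind HN) => I HI IH satI I0I B HB satB decB IB.
case: (classic (I 1)) => [I1|nI1].
  by exists 0%N => n _ y _; rewrite -[y]mulr1; apply: idealMl (IB n 1 I1).
have [g nIg uIg] := exists_u_annihilated HI satI I0I nI1.
pose I' := sat u (adjoin I g).
have I'_ideal : is_ideal I' by apply/(sat_ideal Pu)/adjoin_ideal.
have II' : sub I I' by move=> y /(sub_adjoin g) /(sub_sat Pu).
have I'g : I' g by apply/(sub_sat Pu)/adjoin_mem.
have [NA stA] : stationary (fun n => sat u (adjoin (B n) g)).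
  apply: (IH I') => [||||n|n|n|n] //.
  - by split=> //; exists g.
  - exact: sat_saturated.
  - by move=> y /I0I /II'.
  - exact/(sat_ideal Pu)/adjoin_ideal.
  - exact: sat_saturated.
  - exact/satS/adjoinS/decB.
  - exact/satS/adjoinS/IB.
case: (classic (exists N1, forall y, B N1 y -> I' y -> I y)) => [[N1 BI]|noN1].
  exists (maxn NA N1); apply: stationary_of_adjoin stA _ _ => //; first exact: leq_maxl.
  move=> n c _ Bcg; apply/IB/BI; last exact: idealMl.
  exact: (descending_sub decB (leq_maxr NA N1) Bcg).
have I'B n : sub I' (B n).
  have [] := saturated_dichotomy HI satI uIg (HB n) (satB n) (IB n) => // BI.
  by case: noN1; exists n.
exists NA; apply: stationary_of_adjoin stA _ _ => // n c _ _.
by apply/I'B; apply: idealMl.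
Qed.

Lemma saturated_chain_stationary B : (forall n, is_ideal (B n)) ->
    (forall n, saturated u (B n)) -> descending B -> (forall n, sub I0 (B n)) ->
  stationary B.
Proof.
move=> HB satB decB I0B; apply: (@saturated_chain_stationary_above (sat u I0)) => //.
- exact: sat_ideal.
- exact: sat_saturated.
- exact: sub_sat.
- by move=> n; apply: sat_min.
Qed.

End ArtinianLocalization.

Section KrullPrincipalIdeal.
Variables (R : comNzRingType) (w u : R -> Prop) (x : R).
Hypotheses (HN : noetherian R) (Pw : is_prime_ideal w) (Pu : is_prime_ideal u) (ux : u x).
Hypothesis u_minimal : forall Q, is_prime_ideal Q -> sub w Q -> Q x -> sub Q u -> sub u Q.

Section NoPrimeBetween.
Variables (v : R -> Prop) (a : R).
Hypotheses (Pv : is_prime_ideal v) (wv : sub w v) (vu : sub v u).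
Hypotheses (va : v a) (nwa : ~ w a) (nvx : ~ v x).

Let J n := sat v (adjoin w (a ^+ n)).

Let J_ideal n : is_ideal (J n).
Proof. exact/(sat_ideal Pv)/adjoin_ideal/prime_idealP. Qed.

Let w_sub_J n : sub w (J n).
Proof. by move=> y /(sub_adjoin (a ^+ n)) /(sub_sat Pv). Qed.

Let J_descending : descending J.
Proof.
move=> n; apply: satS => _ [i [c [wi ->]]].
by exists i, (c * a); split=> //; rewrite exprS mulrA.
Qed.

(* Artinianity of [R_u / (w + xR)_u] makes [(w + xR + J n)_u] stationary. *)
Lemma krull_chain_step : exists N, forall y, J N y ->
  exists s k r, [/\ ~ u s, J N.+1 k, J N r & s * y = k + x * r].
Proof.
have [wi _ _] := Pw.
pose C n := sat u (ideal_add (adjoin w x) (J n)).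
have C_ideal n : is_ideal (C n).
  by apply/(sat_ideal Pu)/ideal_add_ideal; first exact: adjoin_ideal.
have [N stC] : stationary C.
  apply: (@saturated_chain_stationary R u (adjoin w x)) => //.
  - exact: adjoin_ideal.
  - move=> Q PQ wxQ; apply: u_minimal => //; last exact/wxQ/adjoin_mem.
    by move=> y /(sub_adjoin x) /wxQ.
  - by move=> n; apply: sat_saturated.
  - move=> n; apply: satS; apply: ideal_add_min.
    + exact: ideal_add_ideal (adjoin_ideal x wi) (J_ideal n).
    + exact: sub_addl (J_ideal n).
    + by move=> y Jy; exact: (sub_addr (adjoin_ideal x wi) (J_descending Jy)).
  - by move=> n y /(sub_addl (J_ideal n)) /(sub_sat Pu).
exists N => y JNy.
have [s nus [_ [j [[w0 [r [ww0 ->]]] [Jj Esy]]]]] : C N.+1 y.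
  by apply/(stC _ (leqnSn N))/(sub_sat Pu)/sub_addr => //; apply: adjoin_ideal.
have Jk : J N.+1 (w0 + j) by apply: idealD => //; apply: w_sub_J.
exists s, (w0 + j), r; split=> //; last by rewrite Esy; ring.
have JNxr : J N (x * r).
  have -> : x * r = s * y - (w0 + j) by rewrite Esy; ring.
  by apply: idealB => //; [apply: idealMl | apply: J_descending].
exact: (saturatedMl (@sat_saturated _ _ Pv _) nvx JNxr).
Qed.

Lemma krull_pow_mem : exists N, sat u (J N.+1) (a ^+ N).
Proof.
have [N step] := krull_chain_step.
have [gs [gsJ Jgs]] := noetherian_finitely_generated HN (J_ideal N).
have gs_sat : forall g, In g gs -> sat u (J N.+1) g.
  apply: (nakayama_sat Pu (J_ideal _) ux) => g /gsJ /step [s [k [r [nus Jk Jr Esg]]]].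
  by exists s, k, r; split=> //; apply: Jgs.
exists N; apply: ideal_span_min (sat_ideal Pu (J_ideal _)) gs_sat _ _.
by apply/Jgs/(sub_sat Pv)/adjoin_mem/prime_idealP.
Qed.

Lemma krull_contradiction : False.
Proof.
have [wi _ wP] := Pw; have [vi _ vP] := Pv.
have [N [tau nutau [t nvt [w1 [c [ww1 Etta]]]]]] := krull_pow_mem.
have : w (a ^+ N * (t * tau - c * a)).
  have -> : a ^+ N * (t * tau - c * a) = t * (tau * a ^+ N) - c * a ^+ N.+1.
    by rewrite exprS; ring.
  by rewrite Etta addrK.
case/wP => [/(prime_notinX Pw nwa) // | /wv v_diff].
have : v (t * tau) by rewrite -(subrK (c * a) (t * tau)); apply: idealD => //; apply: idealMl.
by case/vP => // /vu.
Qed.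

End NoPrimeBetween.

Theorem krull_principal_ideal v : is_prime_ideal v -> sub w v -> sub v u ->
  sub v w \/ sub u v.
Proof.
move=> Pv wv vu; apply: NNPP => /not_or_and [nvw nuv].
have [a va nwa] := not_subP nvw.
apply: (krull_contradiction Pv wv vu va nwa) => vx.
by apply: nuv; apply: u_minimal.
Qed.

End KrullPrincipalIdeal.

Section Spectrum.
Variable R : comNzRingType.
Implicit Types (I : R -> Prop) (P Q : Spec R).

Lemma spec_le_anti P Q : spec_le P Q -> spec_le Q P -> P = Q.
Proof.
case: P Q => [p Pp] [q Pq] /= pq qp.
have epq : p = q.
  apply: functional_extensionality => y.
  by apply: propositional_extensionality; split=> [/pq|/qp].
by subst q; congr exist; apply: proof_irrelevance.
Qed.

Lemma prime_notin_others P (l : list (Spec R)) :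
  exists2 z, ~ sval P z & forall Q, In Q l -> ~ spec_le Q P -> sval Q z.
Proof.
have [_ nP1 _] := svalP P.
elim: l => [|Q l [z nPz lz]]; first by exists 1.
case: (classic (spec_le Q P)) => [QP|nQP].
  by exists z => // Q' [<-|/lz].
have [c Qc nPc] := not_subP nQP.
exists (z * c); first exact: prime_notinM (svalP P) nPz nPc.
have Qi := prime_idealP (svalP Q).
move=> Q' [<- _|l_Q' nQ'P]; first exact: (idealMl z Qi Qc).
exact: (idealMr c (prime_idealP (svalP Q')) (lz Q' l_Q' nQ'P)).
Qed.

Lemma prime_avoidance I (l : list (Spec R)) : is_ideal I ->
  exists2 x, I x & forall P, In P l -> ~ sub I (sval P) -> ~ sval P x.
Proof.
move=> HI; elim: l => [|P l [x Ix lx]]; first by exists 0; [apply: ideal0 |].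
case: (classic (sub I (sval P))) => [IP|/not_subP [a Ia nPa]].
  by exists x => // P' [<-|/lx].
case: (classic (sval P x)) => [Px|nPx]; last by exists x => // P' [<-|/lx].
have [z nPz lz] := prime_notin_others P l.
have Pi := prime_idealP (svalP P).
have nPy : ~ sval P (x + a * z).
  move=> Py; apply: (prime_notinM (svalP P) nPa nPz).
  have -> : a * z = (x + a * z) - x by ring.
  exact: idealB.
exists (x + a * z) => [|P' [<-|l_P' nIP' P'y] //].
  by apply: idealD => //; apply: idealMr.
have [/(_ _ P'y) //|nP'P] := classic (spec_le P' P).
have P'i := prime_idealP (svalP P').
apply: (lx P' l_P' nIP'); have -> : x = (x + a * z) - a * z by ring.
by apply: idealB => //; exact: (idealMl a P'i (lz P' l_P' nP'P)).
Qed.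

Section Finiteness.
Hypothesis HN : noetherian R.

Lemma finite_minimal_primes_over I : is_ideal I ->
  finite_sub (fun P => sub I (sval P) /\ forall Q, sub I (sval Q) -> spec_le Q P -> Q = P).
Proof.
move=> HI; have [l [lI lP]] := primes_over_cover HN HI.
by exists l => P [IP Pmin]; have [Q lQ QP] := lP P IP; rewrite -(Pmin Q (lI Q lQ) QP).
Qed.

Lemma finite_minimal_primes : finite_sub (minimal (@spec_le R)).
Proof.
have [l lP] := finite_minimal_primes_over (@ideal_zero R).
exists l => P Pmin; apply: lP; split=> [_ ->|Q _ /Pmin //].
exact: (ideal0 (prime_idealP (svalP P))).
Qed.

Lemma finite_mub_primes P Q : finite_sub (mub (@spec_le R) (fun M => M = P \/ M = Q)).
Proof.
have Pi := prime_idealP (svalP P); have Qi := prime_idealP (svalP Q).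
have [l lM] := finite_minimal_primes_over (ideal_add_ideal Pi Qi).
have ubP M : ub (@spec_le R) (fun M => M = P \/ M = Q) M <->
              sub (ideal_add (sval P) (sval Q)) (sval M).
  split=> [ubM|PQM _ [->|->] y Ny].
  - apply: ideal_add_min; first exact: prime_idealP (svalP M).
      exact: ubM P (or_introl erefl).
    exact: ubM Q (or_intror erefl).
  - by apply: PQM; exact: (sub_addl Qi Ny).
  - by apply: PQM; exact: (sub_addr Pi Ny).
exists l => M [/ubP ubM Mmin]; apply: lM; split=> // N /ubP; exact: Mmin.
Qed.

Lemma exists_prime_between (u v w : Spec R) (S : list (Spec R)) :
    lt (@spec_le R) w v -> lt (@spec_le R) v u ->
  exists q, [/\ lt (@spec_le R) w q, lt (@spec_le R) q u &
                forall P, In P S -> spec_le q P -> spec_le u P].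
Proof.
move=> [wv nwv] [vu nvu].
have nuv : ~ spec_le u v by move=> uv; apply/nvu/spec_le_anti.
have [x ux xS] := prime_avoidance (v :: S) (prime_idealP (svalP u)).
have nvx : ~ sval v x by apply: xS nuv; left.
have [Q [PQ wQ Qx Qu nuQ]] : exists Q : R -> Prop,
    [/\ is_prime_ideal Q, sub (sval w) Q, Q x, sub Q (sval u) & ~ sub (sval u) Q].
  apply: NNPP => noQ.
  have [Q PQ wQ Qx Qu|vw|//] := krull_principal_ideal HN (svalP w) (svalP u) ux _ (svalP v) wv vu.
    by apply: NNPP => nuQ; apply: noQ; exists Q.
  exact/nwv/spec_le_anti.
exists (exist _ Q PQ); split=> [|| P SP qP].
- by split=> // wq; apply: nvx; apply: wv; rewrite wq.
- by split=> // qu; apply: nuQ; rewrite -qu.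
- by apply: NNPP => nuP; apply: (xS P (or_intror SP) nuP); apply: qP.
Qed.

End Finiteness.
End Spectrum.

Lemma finite_sub_incl (T : Type) (A B : T -> Prop) :
  (forall x, B x -> A x) -> finite_sub A -> finite_sub B.
Proof. by move=> BA [s As]; exists s => x /BA /As. Qed.

Lemma finite_sub_bigcup (I T : Type) (A : I -> Prop) (B : I -> T -> Prop) :
    finite_sub A -> (forall i, A i -> finite_sub (B i)) ->
  finite_sub (fun x => exists2 i, A i & B i x).
Proof.
move=> [s As] Bfin.
suff [l sl] : exists l, forall i x, In i s -> A i -> B i x -> In x l.
  by exists l => x [i Ai Bix]; apply: sl Bix => //; apply: As.
elim: s {As} => [|i s [l sl]]; first by exists nil.
case: (classic (A i)) => [/Bfin [li Bli]|nAi].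
  exists (li ++ l) => j x [<-|sj] Aj Bjx; apply/in_app_iff; first by left; apply: Bli.
  by right; apply: sl Bjx.
by exists l => j x [<-|sj] //; apply: sl.
Qed.

Section DimensionTwoPoset.
Variables (T : Type) (le : T -> T -> Prop).
Hypotheses (le_refl : forall x, le x x) (le_trans : forall x y z, le x y -> le y z -> le x z).
Hypothesis le_anti : forall x y, le x y -> le y x -> x = y.
Hypothesis dim2 : dim_le le (fun _ => True) 2.
Implicit Types a b c d q z : T.

Lemma no_chain3 a b c d : lt le a b -> lt le b c -> lt le c d -> False.
Proof.
move=> ab bc cd; apply: dim2.
exists (fun i => match i with 0 => a | 1 => b | 2 => c | _ => d end)%N.
by split=> // [[|[|[|i]]]].
Qed.

Lemma minimal_of_lt2 a b c : lt le a b -> lt le b c -> minimal le a.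
Proof. by move=> ab bc z za; apply: NNPP => nza; exact: (no_chain3 (conj za nza) ab bc). Qed.

Lemma height2_of_lt2 a b c : lt le a b -> lt le b c -> Hset le 2 c.
Proof.
move=> [ab nab] [bc nbc]; split; last by move=> [f [_ f_lt]]; apply: dim2; exists f.
exists (fun i => match i with 0 => a | 1 => b | _ => c end)%N.
by split=> [[|[|i]] _|[|[|i]] //]; rewrite /Lset //; apply: le_trans bc.
Qed.

Lemma bc_set_of_avoiding u w q (S : list T) : lt le w q -> lt le q u ->
    (forall z, Hset le 2 z -> In z S) ->
    (forall z m, minimal le z -> z <> w -> mub le (fun x => x = w \/ x = z) m -> In m S) ->
    (forall P, In P S -> le q P -> le u P) ->
  bc_set le u w q.
Proof.
move=> [wq nwq] [qu nqu] H2S mubS qS.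
have wmin : minimal le w by apply: minimal_of_lt2 (conj qu nqu); split.
split=> z; split.
- move=> [qz nzq]; apply: NNPP => nzu; case: (classic (le u z)) => [uz|nuz].
    exact: (no_chain3 (conj wq nwq) (conj qu nqu) (conj uz (fun uz' => nzu (esym uz')))).
  apply/nuz/qS => //; apply/H2S/(height2_of_lt2 (conj wq nwq)).
  by split=> // zq; exact: nzq (esym zq).
- by move=> ->; split=> // uq; exact: nqu (esym uq).
- move=> [zq nzq]; have zmin : minimal le z by apply: minimal_of_lt2 (conj qu nqu); split.
  apply: NNPP => nzw; apply: (nqu); apply: le_anti => //; apply: qS (le_refl q).
  apply: (mubS z) => //; split=> [_ [->|->] //|m ubm mq].
  apply: NNPP => nmq.
  have wm : lt le w m.
    split; first by apply: ubm; left.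
    by move=> wm; apply: nzw; apply: wmin; rewrite wm; apply: ubm; right.
  exact: (no_chain3 wm (conj mq nmq) (conj qu nqu)).
- by move=> ->; split=> // wq'; exact: nwq (esym wq').
Qed.

Lemma bc_set_infinite :
    finite_sub (Hset le 2) -> finite_sub (minimal le) ->
    (forall a b, minimal le a -> minimal le b -> a <> b ->
       finite_sub (mub le (fun x => x = a \/ x = b))) ->
    (forall u v w, lt le w v -> lt le v u -> forall S : list T,
       exists q, [/\ lt le w q, lt le q u & forall P, In P S -> le q P -> le u P]) ->
  forall u v w, lt le v u -> lt le w v -> ~ finite_sub (bc_set le u w).
Proof.
move=> [H2 H2fin] minfin mubfin between u v w vu wv [s bcs].
have wmin := minimal_of_lt2 wv vu.
have [L Lmub] := finite_sub_bigcup (B := fun z => mub le (fun x => x = w \/ x = z))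
  (finite_sub_incl (fun z => @proj1 _ (z <> w)) minfin)
  (fun z '(conj zmin nzw) => mubfin w z wmin zmin (nesym nzw)).
have [q [wq [qu nqu] qS]] := between u v w wv vu (s ++ H2 ++ L).
have qbc : bc_set le u w q.
  apply: (bc_set_of_avoiding (S := H2 ++ L)) wq (conj qu nqu) _ _ _.
  - by move=> z /H2fin H2z; apply/in_app_iff; left.
  - by move=> z m zmin nzw mubm; apply/in_app_iff; right; apply: Lmub; exists z.
  - by move=> P SP; apply: qS; apply/in_app_iff; right.
apply: nqu; apply: le_anti => //; apply: qS (le_refl q).
by apply/in_app_iff; left; apply: bcs.
Qed.

End DimensionTwoPoset.

Local Close Scope ring_scope.

Theorem theorem4p2 (R : comNzRingType) :
  noetherian R ->
  dim_eq (@spec_le R) (fun _ => True) 2 ->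
  finite_sub (Hset (@spec_le R) 2) ->
  K_poset (@spec_le R).
Proof.
move=> HN [_ dim2] H2fin.
have minfin := finite_minimal_primes HN.
split=> //; first by move=> P Q _ _ _; apply: finite_mub_primes.
apply: bc_set_infinite => //.
- by move=> P.
- by move=> P Q M PQ QM y /PQ /QM.
- exact: spec_le_anti.
- by move=> P Q _ _ _; apply: finite_mub_primes.
- by move=> u v w wv vu S; exact: (exists_prime_between HN S wv vu).
Qed.
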